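(* Let $V=\mathbb R^{2n}$ with basis $e_1,\dots,e_n,e_1',\dots,e_n'$ and scalar product $\langle\cdot,\cdot\rangle$ of signature $(n,n)$ given by $\langle e_i,e_j\rangle=\delta_{ij}$, $\langle e_i',e_j'\rangle=-\delta_{ij}$, $\langle e_i,e_j'\rangle=0$. Let $\Delta_{\mathfrak{so}(n)}\subset\mathfrak{so}(V)$ be the diagonal subalgebra consisting of the endomorphisms $A$ with $Ae_j=\sum_k a_{kj}e_k$ and $Ae_j'=\sum_ka_{kj}e_k'$ for some skew-symmetric real $n\times n$ matrix $(a_{kj})$. Then its generalized first prolongation vanishes: $\Delta_{\mathfrak{so}(n)}^{\langle1\rangle}=0$.
   Context: For a Lie subalgebra $\mathfrak h\subset\mathfrak{so}(V)$, an element $\eta\in V^*\otimes\mathfrak h$ assigns to $u\in V$ an endomorphism $\eta_u\in\mathfrak h$, and we write $\eta(u,v,w)=\langle\eta_uv,w\rangle$ (skew in $v,w$). The generalized first prolongation is $\mathfrak h^{\langle1\rangle}=\{\eta\in V^*\otimes\mathfrak h:\ \eta(u,v,w)+\eta(w,u,v)+\eta(v,w,u)=0\ \text{for all }u,v,w\in V\}$. *)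

From HB Require Import structures.
From mathcomp Require Import all_boot all_order all_algebra.
Set Implicit Arguments. Unset Strict Implicit. Unset Printing Implicit Defensive.
Import Order.TTheory GRing.Theory Num.Theory.
Local Open Scope ring_scope.

(* V = R^(2n) as column vectors 'cV_(n+n); coordinates 0..n-1 are e_1..e_n,
   coordinates n..2n-1 are e'_1..e'_n. *)

Definition gram (R : ringType) (n : nat) : 'M[R]_(n + n) :=
  block_mx 1%:M 0 0 (- 1%:M).

Definition sprod (R : ringType) (n : nat) (x y : 'cV[R]_(n + n)) : R :=
  (x^T *m gram R n *m y) 0 0.

Definition in_diag_so (R : ringType) (n : nat) (A : 'M[R]_(n + n)) : Prop :=
  exists a : 'M[R]_n, a^T = - a /\ A = block_mx a 0 0 a.

Definition eta3 (R : ringType) (n : nat)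
  (eta : 'cV[R]_(n + n) -> 'M[R]_(n + n)) (u v w : 'cV[R]_(n + n)) : R :=
  sprod (eta u *m v) w.

(* eta in V^* (x) h  is a linear map V -> End(V) with values in h;
   generalized first prolongation h^<1>. *)
Definition in_gen_prolongation (R : ringType) (n : nat)
  (h : 'M[R]_(n + n) -> Prop)
  (eta : {linear 'cV[R]_(n + n) -> 'M[R]_(n + n)}) : Prop :=
  (forall u, h (eta u)) /\
  (forall u v w, eta3 eta u v w + eta3 eta w u v + eta3 eta v w u = 0).

(* Write V = V+ (+) V- for the spans of the e_i and of the e'_i.  Every element of
   Delta preserves both summands, and V+ is orthogonal to V-.  So if u lies in V+
   and v, w in V-, two of the three terms of the cyclic identity pair a vector of
   V+ with one of V-, and the identity reduces to <eta_u v, w> = 0.  As the scalar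
   product is nondegenerate on V-, the block of eta_u is zero, i.e. eta_u = 0; the
   case u in V- is symmetric, and linearity gives eta = 0. *)
From HB Require Import structures.
From mathcomp Require Import all_boot all_order all_algebra.
Import GRing.Theory Num.Theory.
Local Open Scope ring_scope.

Section SignatureForm.
Variables (R : nzRingType) (n : nat).
Implicit Types (a : 'M[R]_n) (p q r s : 'cV[R]_n).

Lemma sprod_col_mx p q r s :
  sprod (col_mx p q) (col_mx r s) = (p^T *m r) 0 0 - (q^T *m s) 0 0.
Proof.
rewrite /sprod /gram tr_col_mx mul_row_block !mulmx0 addr0 add0r mulmx1.
by rewrite mulmxN mulmx1 mul_row_col mulNmx !mxE.
Qed.

Lemma sprod_top_bot p q : sprod (col_mx p 0) (col_mx 0 q) = 0.
Proof. by rewrite sprod_col_mx trmx0 !mulmx0 mul0mx mxE subrr. Qed.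

Lemma sprod_bot_top p q : sprod (col_mx 0 p) (col_mx q 0) = 0.
Proof. by rewrite sprod_col_mx trmx0 !mulmx0 mul0mx mxE subrr. Qed.

Lemma sprod_top p q : sprod (col_mx p 0) (col_mx q 0) = (p^T *m q) 0 0.
Proof. by rewrite sprod_col_mx trmx0 mul0mx [X in _ - X]mxE subr0. Qed.

Lemma sprod_bot p q : sprod (col_mx 0 p) (col_mx 0 q) = - (p^T *m q) 0 0.
Proof. by rewrite sprod_col_mx trmx0 mul0mx [X in X - _]mxE sub0r. Qed.

Lemma mul_diag_block_col a p q :
  block_mx a 0 0 a *m col_mx p q = col_mx (a *m p) (a *m q).
Proof. by rewrite mul_block_col !mul0mx addr0 add0r. Qed.

Lemma matrix_eq0_of_forms a :
  (forall p q, ((a *m p)^T *m q) 0 0 = 0) -> a = 0.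
Proof.
move=> form0; apply/matrixP => i j.
by rewrite [RHS]mxE -(form0 (delta_mx j 0) (delta_mx i 0)) -!colE !mxE.
Qed.

End SignatureForm.

Section DiagonalProlongation.
Variables (R : nzRingType) (n : nat) (eta : 'cV[R]_(n + n) -> 'M[R]_(n + n)).
Implicit Types (p q x : 'cV[R]_n).

Hypothesis eta_diag : forall u, exists a, eta u = block_mx a 0 0 a.
Hypothesis eta_cyclic :
  forall u v w, eta3 eta u v w + eta3 eta w u v + eta3 eta v w u = 0.

Lemma eta_mul_top u x : exists y, eta u *m col_mx x 0 = col_mx y 0.
Proof.
have [a ->] := eta_diag u.
by exists (a *m x); rewrite mul_diag_block_col mulmx0.
Qed.

Lemma eta_mul_bot u x : exists y, eta u *m col_mx 0 x = col_mx 0 y.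
Proof.
have [a ->] := eta_diag u.
by exists (a *m x); rewrite mul_diag_block_col mulmx0.
Qed.

Lemma eta_top_eq0 x : eta (col_mx x 0) = 0.
Proof.
have [a eta_x] := eta_diag (col_mx x 0).
suff a0 : a = 0 by rewrite eta_x a0 block_mx0.
apply: matrix_eq0_of_forms => p q.
have := eta_cyclic (col_mx x 0) (col_mx 0 p) (col_mx 0 q).
rewrite /eta3 eta_x mul_diag_block_col mulmx0 sprod_bot.
have [y ->] := eta_mul_top (col_mx 0 q) x.
have [z ->] := eta_mul_bot (col_mx 0 p) q.
by rewrite sprod_top_bot sprod_bot_top !addr0 => /eqP; rewrite oppr_eq0 => /eqP.
Qed.

Lemma eta_bot_eq0 x : eta (col_mx 0 x) = 0.
Proof.
have [a eta_x] := eta_diag (col_mx 0 x).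
suff a0 : a = 0 by rewrite eta_x a0 block_mx0.
apply: matrix_eq0_of_forms => p q.
have := eta_cyclic (col_mx 0 x) (col_mx p 0) (col_mx q 0).
rewrite /eta3 eta_x mul_diag_block_col mulmx0 sprod_top.
have [y ->] := eta_mul_bot (col_mx q 0) x.
have [z ->] := eta_mul_top (col_mx p 0) q.
by rewrite sprod_bot_top sprod_top_bot !addr0.
Qed.

End DiagonalProlongation.

Theorem lemma2p19 (R : realFieldType) (n : nat)
  (eta : {linear 'cV[R]_(n + n) -> 'M[R]_(n + n)}) :
  in_gen_prolongation (@in_diag_so R n) eta ->
  forall u : 'cV[R]_(n + n), eta u = 0.
Proof.
move=> [eta_so eta_cyclic] u.
have eta_diag v : exists a, eta v = block_mx a 0 0 a.
  by have [a [_ ->]] := eta_so v; exists a.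
rewrite -[u]vsubmxK -[usubmx u]addr0 -[dsubmx u]add0r -add_col_mx linearD /=.
by rewrite eta_top_eq0 // eta_bot_eq0 // addr0.
Qed.
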